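(* Let $\mathcal{F}_s$ be as below and let $E_s$ be the number of forms $f\in\mathcal{F}_s$ such that $-3D(f)$ is imaginary or unusual with $\mathrm{sgn}(-3D(f))\in\{1,h\}$, the Hessian $H_f=(P,Q,R)$ is partially reduced, and $\deg(P)=\deg(R)$. Then $E_s\le\frac{q+1}{2}q^s$ if $s\equiv0\pmod 4$, and $E_s=0$ if $s\not\equiv0\pmod4$.
   Context: $q$ is a prime power with $\gcd(q,6)=1$; for nonzero $H\in\mathbb{F}_q[t]$, $|H|=q^{\deg H}$, $\mathrm{sgn}(H)$ = leading coefficient, $|0|=0$. A binary cubic form $(a,b,c,d)$ is $ax^3+bx^2y+cxy^2+dy^3$ over $\mathbb{F}_q[t]$, irreducible, with discriminant $D(f)=18abcd+b^2c^2-4ac^3-4b^3d-27a^2d^2$ and Hessian $(P,Q,R)$, $P=b^2-3ac$, $Q=bc-9ad$, $R=c^2-3bd$ (a binary quadratic form $Px^2+Qxy+Ry^2$ of discriminant $-3D(f)$). $\Delta$ is imaginary if $\deg\Delta$ odd and unusual if $\deg\Delta$ even and $\mathrm{sgn}(\Delta)$ a non-square in $\mathbb{F}_q^*$. Fix a primitive root $h$ of $\mathbb{F}_q^*$, $S=\{h^i:0\le i\le(q-3)/2\}$. A binary quadratic form $(A,B,C)$ is partially reduced if $|B|<|A|\le|C|$; if $|A|<|C|$ then $\mathrm{sgn}(A)\in\{1,h\}$, if $|A|=|C|$ then $\mathrm{sgn}(A)=1$; and $B\ne0$ implies $\mathrm{sgn}(B)\in S$. $\mathcal{F}_s$ is the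 set of binary cubic forms $f=(a,b,c,d)$ with $\deg D(f)=s$, $\deg a\le s/4$, $\deg b\le s/4$, $\deg(ad)\le s/2$, $\deg(bc)\le s/2$, and $\mathrm{sgn}(a)\in S$. *)

From HB Require Import structures.
From mathcomp Require Import all_boot all_order all_algebra.
Set Implicit Arguments. Unset Strict Implicit. Unset Printing Implicit Defensive.
Import GRing.Theory.
Local Open Scope ring_scope.

Section Defs.
Variable F : finFieldType.

Definition absq (p : {poly F}) : nat :=
  if p == 0 then 0%N else (#|F| ^ (size p).-1)%N.

Definition sgn (p : {poly F}) : F := lead_coef p.

(* "k * deg p <= n", i.e. deg p <= n/k (true for p = 0, deg 0 = -oo) *)
Definition degle (p : {poly F}) (k n : nat) : bool :=
  (p == 0) || ((size p).-1 * k <= n)%N.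

Definition primitive_root (h : F) : Prop :=
  forall x : F, x != 0 -> exists i : nat, x = h ^+ i.

Definition inS (h x : F) : Prop :=
  exists2 i : nat, (i <= (#|F| - 3)./2)%N & x = h ^+ i.

Definition cubic_form := ({poly F} * {poly F} * {poly F} * {poly F})%type.
Definition fa (f : cubic_form) := f.1.1.1.
Definition fb (f : cubic_form) := f.1.1.2.
Definition fc (f : cubic_form) := f.1.2.
Definition fd (f : cubic_form) := f.2.

Definition disc (f : cubic_form) : {poly F} :=
  let a := fa f in let b := fb f in let c := fc f in let d := fd f in
  18 * a * b * c * d + b ^+ 2 * c ^+ 2 - 4 * a * c ^+ 3
    - 4 * b ^+ 3 * d - 27 * a ^+ 2 * d ^+ 2.

Definition hessP (f : cubic_form) := fb f ^+ 2 - 3 * fa f * fc f.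
Definition hessQ (f : cubic_form) := fb f * fc f - 9 * fa f * fd f.
Definition hessR (f : cubic_form) := fc f ^+ 2 - 3 * fb f * fd f.

Definition irreducible_form (f : cubic_form) : Prop :=
  fa f != 0 /\
  irreducible_poly
    (Poly [:: FracField.tofrac (fd f); FracField.tofrac (fc f);
              FracField.tofrac (fb f); FracField.tofrac (fa f)]
      : {poly {fraction {poly F}}}).

Definition is_square (x : F) : Prop := exists y : F, x = y ^+ 2.

Definition imaginary (D : {poly F}) : Prop := D != 0 /\ odd (size D).-1.
Definition unusual (D : {poly F}) : Prop :=
  D != 0 /\ ~~ odd (size D).-1 /\ ~ is_square (sgn D).

Definition partially_reduced (h : F) (A B C : {poly F}) : Prop :=
  [/\ (absq B < absq A)%N, (absq A <= absq C)%N,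
      ((absq A < absq C)%N -> sgn A = 1 \/ sgn A = h),
      (absq A = absq C -> sgn A = 1) &
      (B != 0 -> inS h (sgn B))].

Definition in_Fs (h : F) (s : nat) (f : cubic_form) : Prop :=
  [/\ irreducible_form f,
      disc f != 0 /\ (size (disc f)).-1 = s,
      degle (fa f) 4 s /\ degle (fb f) 4 s,
      degle (fa f * fd f) 2 s /\ degle (fb f * fc f) 2 s &
      inS h (sgn (fa f))].

Definition counted (h : F) (s : nat) (f : cubic_form) : Prop :=
  let Delta := - 3 * disc f in
  [/\ in_Fs h s f,
      (imaginary Delta \/ unusual Delta) /\ (sgn Delta = 1 \/ sgn Delta = h),
      partially_reduced h (hessP f) (hessQ f) (hessR f) &
      size (hessP f) = size (hessR f)].

End Defs.

From HB Require Import structures.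
From mathcomp Require Import all_boot all_order all_algebra all_field.
From mathcomp Require Import ring zify.
Set Implicit Arguments. Unset Strict Implicit. Unset Printing Implicit Defensive.
Import GRing.Theory.
Local Open Scope ring_scope.

(* For a counted form the Hessian (P, Q, R) has P monic and deg Q < deg P = deg R, so
   -3D = Q^2 - 4PR has even degree and leading coefficient -4 sgn R: it is unusual, and
   sgn(-3D) = h is a non-square.  Comparing degrees in P = b^2 - 3ac and R = c^2 - 3bd
   under the constraints of F_s forces deg P = 2k, s = 4k and deg a, b, c, d <= k.  The
   coefficients A, B, C, D of t^k then satisfy B^2 - 3AC = 1, BC - 9AD = 0 and
   4(C^2 - 3BD) = -h; hence (B, 3A/2) lies on the conic x^2 - h y^2 = 1, which has at
   most q + 1 points, and C, D are determined by A, B.  So f is determined by a point of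
   the conic and its 4k lower coefficients.  Finally f(x, y) |-> f(-x, y) preserves all
   of this but moves sgn a out of S, which halves the count. *)

Section TopCoef.
Variable R : nzRingType.
Implicit Types x y z w : {poly R}.

Lemma coef_mul_top x y k :
  (size x <= k.+1)%N -> (size y <= k.+1)%N -> (x * y)`_(k + k) = x`_k * y`_k.
Proof.
move=> sx sy; have kk : (k < (k + k).+1)%N by rewrite ltnS leq_addr.
rewrite coefM (bigD1 (Ordinal kk)) //= addnK big1 ?addr0 // => j /eqP neq_jk.
have [ltjk|ltkj|eqjk] := ltngtP j k.
- by rewrite [y`_ _]nth_default ?mulr0 //; apply: leq_trans sy _; lia.
- by rewrite [x`_ _]nth_default ?mul0r //; apply: leq_trans sx _.
- by case: neq_jk; apply: val_inj.
Qed.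

Lemma coef_quad_top x y z w (m k : nat) :
  [/\ size x <= k.+1, size y <= k.+1, size z <= k.+1 & size w <= k.+1]%N ->
  (x * y - m%:R * z * w)`_(k + k) = x`_k * y`_k - m%:R * z`_k * w`_k.
Proof.
case=> sx sy sz sw.
by rewrite coefB -!mulrA !mulr_natl coefMn !coef_mul_top.
Qed.

Definition low_coefs (k : nat) x : k.-tuple R := [tuple x`_i | i < k].

Lemma poly_top_low_inj (k : nat) x y : (size x <= k.+1)%N -> (size y <= k.+1)%N ->
  x`_k = y`_k -> low_coefs k x = low_coefs k y -> x = y.
Proof.
move=> sx sy ek el; apply/polyP => i; have [ltik|ltki|->] := ltngtP i k => //.
  by have := congr1 (fun t => tnth t (Ordinal ltik)) el; rewrite !tnth_mktuple.
by rewrite !nth_default // (leq_trans _ ltki).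
Qed.

End TopCoef.

Section PolySize.
Variable R : idomainType.
Implicit Types x y : {poly R}.

Lemma size_natmul (m : nat) x : m%:R != 0 :> R -> size (m%:R * x) = size x.
Proof. by move=> m0; rewrite -polyC_natr mul_polyC size_scale. Qed.

Lemma size_subr_natmul_max (m : nat) x y : m%:R != 0 :> R ->
  let z := x - m%:R * y in
  [/\ size z <= maxn (size x) (size y),
      size x <= maxn (size z) (size y) & size y <= maxn (size z) (size x)]%N.
Proof.
move=> m0 z; rewrite -(size_natmul y m0).
split; first by rewrite -(size_polyN (_ * y)) size_polyD.
  by rewrite (_ : x = z + m%:R * y) ?size_polyD // /z subrK.
have -> : m%:R * y = x - z by rewrite /z opprB addrC subrK.
by rewrite maxnC -(size_polyN z) size_polyD.
Qed.

Lemma size_sqr_le x k : (size (x * x)%R <= (k + k).+1)%N = (size x <= k.+1)%N.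
Proof.
have [->|x0] := eqVneq x 0; first by rewrite mul0r size_poly0.
by rewrite size_mul //; have := size_poly_gt0 x; rewrite x0 => ?; apply/idP/idP; lia.
Qed.

Lemma hessian_size_bound (a b c d : {poly R}) (n : nat) :
  3%:R != 0 :> R -> a != 0 ->
  size (b * b - 3%:R * (a * c)) = n -> size (c * c - 3%:R * (b * d)) = n ->
  (size (a * a)%R <= n)%N -> (size (b * b)%R <= n)%N ->
  (size (a * d)%R <= n)%N -> (size (b * c)%R <= n)%N ->
  exists2 k, n = (k + k).+1 &
    [/\ size a <= k.+1, size b <= k.+1, size c <= k.+1 & size d <= k.+1]%N.
Proof.
move=> n3 a0 EP ER Haa Hbb Had Hbc.
have [Pmax _ _] := size_subr_natmul_max (b * b) (a * c) n3; rewrite EP in Pmax.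
have [_ Rcc Rbd] := size_subr_natmul_max (c * c) (b * d) n3; rewrite ER in Rcc Rbd.
have sa : (0 < size a)%N by rewrite size_poly_gt0.
(* Otherwise c^2 cancels against 3bd, so deg b < deg c < deg d, which is
   incompatible with deg (ad), deg (bc) <= deg P. *)
have Hcc : (size (c * c)%R <= n)%N.
  rewrite leqNgt; apply/negP => ncc.
  have sbd : size (b * d) = size (c * c) by move: Rcc Rbd ncc; clear; lia.
  have c0 : c != 0 by apply: contraTneq ncc => ->; rewrite mul0r size_poly0.
  have /andP[b0 d0] : (b != 0) && (d != 0).
    by rewrite -negb_or -mulf_eq0 -size_poly_gt0 sbd; move: ncc; clear; lia.
  have := size_poly_gt0 b; have := size_poly_gt0 c; have := size_poly_gt0 d.
  rewrite b0 c0 d0; move: Pmax sbd ncc Hbc Had Hbb; rewrite !size_mul //.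
  by clear; lia.
have [k En [Ha Hb Hc]] : exists2 k, n = (k + k).+1 &
    [/\ size a <= k.+1, size b <= k.+1 & size c <= k.+1]%N.
  suff [k En] : exists k, n = (k + k).+1.
    by exists k => //; split; rewrite -size_sqr_le -En.
  have n0 : (0 < n)%N by move: Haa sa; rewrite size_mul //; clear; lia.
  have [nbb|bbn] := leqP n (size (b * b)).
    have b0 : b != 0 by apply: contraTneq nbb => ->; rewrite mul0r size_poly0 -ltnNge.
    exists (size b).-1; move: nbb Hbb; rewrite size_mul //.
    by have := size_poly_gt0 b; rewrite b0; clear; lia.
  have nac : (n <= size (a * c)%R)%N by move: Pmax bbn; clear; lia.
  have c0 : c != 0 by apply: contraTneq nac => ->; rewrite mulr0 size_poly0 -ltnNge.
  exists (size a).-1; move: nac Haa Hcc sa; rewrite !size_mul //.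
  by have := size_poly_gt0 c; rewrite c0; clear; lia.
exists k => //; split => //; rewrite leqNgt; apply/negP => kd.
have d0 : d != 0 by apply: contraTneq kd => ->; rewrite size_poly0.
have ka : (size a <= k)%N by move: Had kd (En); rewrite size_mul //; clear; lia.
have kbb : (size (b * b)%R < n)%N.
  have [->|b0] := eqVneq b 0; first by rewrite mul0r size_poly0 En.
  have := size_poly_gt0 b; rewrite b0; move: Rbd Hcc kd (En).
  by rewrite !(size_mul b0) //; clear; lia.
have kac : (size (a * c)%R < n)%N.
  have [->|c0] := eqVneq c 0; first by rewrite mulr0 size_poly0 En.
  by rewrite size_mul //; have := size_poly_gt0 c; rewrite c0; move: ka Hc (En); clear; lia.
by move: Pmax kbb kac; clear; lia.
Qed.

Lemma size_lead_quad_disc (P Q S : {poly R}) : 4%:R != 0 :> R ->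
  (size Q < size P)%N -> size S = size P ->
  size (Q ^+ 2 - 4%:R * (P * S)) = (size P + size P).-1 /\
  lead_coef (Q ^+ 2 - 4%:R * (P * S)) = - (4%:R * (lead_coef P * lead_coef S)).
Proof.
move=> n4 ltQP eqSP.
have P0 : P != 0 by rewrite -size_poly_gt0; apply: leq_ltn_trans ltQP.
have S0 : S != 0 by rewrite -size_poly_gt0 eqSP size_poly_gt0.
have sPS : size (- (4%:R * (P * S))) = (size P + size P).-1.
  by rewrite size_polyN size_natmul // size_mul // eqSP.
have ltQ2 : (size (Q ^+ 2) < size (- (4%:R * (P * S))))%N.
  by rewrite sPS expr2; apply: leq_ltn_trans (size_polyMleq _ _) _; lia.
rewrite addrC size_polyDl // lead_coefDl // sPS lead_coefN.
by rewrite -polyC_natr mul_polyC lead_coefZ lead_coefM.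
Qed.

End PolySize.

Section FiniteField.
Variable F : finFieldType.

Lemma pchar_dvd_card (p : nat) : p \in [pchar F] -> (p %| #|F|)%N.
Proof.
move=> pF; have := finNzRing_gt1 F; rewrite (card_pprimeChar pF).
by case: logn => [|n] // _; rewrite expnS dvdn_mulr.
Qed.

Lemma natr_neq0_coprime (m p : nat) :
  coprime #|F| m -> prime p -> (p %| m)%N -> p%:R != 0 :> F.
Proof.
move=> cop pp pm; apply/negP => p0.
have /pchar_dvd_card pF : p \in [pchar F] by rewrite inE pp p0.
have : (p %| gcdn #|F| m)%N by rewrite dvdn_gcd pF pm.
by rewrite (eqP cop) dvdn1 => /eqP p1; move: (prime_gt1 pp); rewrite p1.
Qed.

Lemma primitive_root_order (h : F) (n : nat) :
  primitive_root h -> (0 < n)%N -> h ^+ n = 1 -> (#|F|.-1 <= n)%N.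
Proof.
move=> hF n0 hn; apply: (@leq_trans #|codom (fun i : 'I_n => h ^+ i)|).
  rewrite -(cardC1 0); apply: subset_leq_card; apply/subsetP => x.
  rewrite !inE => x0; apply/codomP; have [i ->] := hF x x0.
  exists (Ordinal (ltn_pmod i n0)).
  by rewrite /= {1}(divn_eq i n) exprD mulnC exprM hn expr1n mul1r.
by rewrite -[n in (_ <= n)%N]card_ord; apply: leq_image_card.
Qed.

Lemma inS_oppr (h x : F) :
  primitive_root h -> 2%:R != 0 :> F -> inS h x -> ~ inS h (- x).
Proof.
move=> hF n2.
have m1 : (-1 : F) != 1 by apply: contra_neq n2 => e; rewrite mulr2n -{1}e addNr.
have h0 : h != 0.
  have [i] : exists i, -1 = h ^+ i by apply: hF; rewrite oppr_eq0 oner_eq0.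
  move=> e; apply/eqP => h0; move: e; rewrite h0; case: i => [|i] /eqP.
    by rewrite expr0 (negbTE m1).
  by rewrite exprS mul0r oppr_eq0 oner_eq0.
have pow_neqN1 : forall d, (d <= (#|F| - 3)./2)%N -> h ^+ d != -1.
  move=> d led; apply/eqP => hd.
  have d0 : (0 < d)%N by case: d hd {led} => // /eqP; rewrite expr0 eq_sym (negbTE m1).
  have dd : (0 < d + d)%N by rewrite addn_gt0 d0.
  have := primitive_root_order hF dd; rewrite exprD hd mulrNN mulr1 => /(_ erefl).
  have := odd_double_half (#|F| - 3); have := finNzRing_gt1 F; rewrite -addnn.
  lia.
have pow_sub : forall i j, (i <= j)%N -> h ^+ j = - h ^+ i -> h ^+ (j - i) = -1.
  move=> i j ij e; apply: (mulfI (expf_neq0 i h0)).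
  by rewrite -exprD subnKC // e mulrN1.
move=> [i iS ->] [j jS e]; have [ij|ji] := leqP i j.
  by have := pow_neqN1 _ (leq_trans (leq_subr i j) jS); rewrite pow_sub ?eqxx.
have := pow_neqN1 _ (leq_trans (leq_subr j i) iS).
by rewrite pow_sub ?eqxx ?(ltnW ji) // -e opprK.
Qed.

Definition norm1_conic (h : F) : {set F * F} :=
  [set p | p.1 ^+ 2 - h * p.2 ^+ 2 == 1].

Lemma card_norm1_conic (h : F) : ~ is_square h -> (#|norm1_conic h| <= #|F|.+1)%N.
Proof.
move=> nsq.
have h0 : h != 0 by apply: contra_not_neq nsq => ->; exists 0; rewrite expr0n.
have ht0 (t : F) : 1 - h * t ^+ 2 != 0.
  apply: contra_not_neq nsq => /eqP; rewrite subr_eq0 => /eqP e.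
  have t0 : t != 0 by apply: contra_eq_neq e => ->; rewrite expr0n mulr0 oner_eq0.
  by exists t^-1; apply: (mulIf (expf_neq0 2 t0)); rewrite -e exprVn mulVf ?expf_neq0.
have y0 (x y : F) : x ^+ 2 - h * y ^+ 2 = 1 -> x = -1 -> y = 0.
  move=> e ex; move/eqP: e; rewrite ex sqrrN expr1n subr_eq addrC -subr_eq subrr eq_sym.
  by rewrite mulf_eq0 (negbTE h0) expf_eq0 => /eqP.
have xt (x y : F) : x ^+ 2 - h * y ^+ 2 = 1 -> x != -1 ->
    x * (1 - h * (y / (x + 1)) ^+ 2) = 1 + h * (y / (x + 1)) ^+ 2.
  move=> e x1; rewrite -addr_eq0 in x1; set t := y / (x + 1).
  have ey : y = t * (x + 1) by rewrite /t divfK.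
  apply/eqP; rewrite -subr_eq0; apply/eqP; apply: (mulfI x1); rewrite mulr0.
  transitivity (x ^+ 2 - h * y ^+ 2 - 1); first by rewrite ey; ring.
  by rewrite e subrr.
(* A point other than (-1, 0) is determined by the slope of its line to (-1, 0). *)
pose g (p : F * F) := if p.1 == -1 then None else Some (p.2 / (p.1 + 1)).
rewrite -card_option -(@card_in_imset _ _ g); first exact: max_card.
move=> [x y] [x' y']; rewrite !inE /= => /eqP e /eqP e'; rewrite /g /=.
have [x1|x1] := eqVneq x (-1); have [x'1|x'1] := eqVneq x' (-1) => //.
  by rewrite (y0 _ _ e x1) (y0 _ _ e' x'1) x1 x'1.
move=> [] et; have ex : x = x'.
  by apply: (mulIf (ht0 (y / (x + 1)))); rewrite xt // et xt.
have x1' : x + 1 != 0 by rewrite addr_eq0.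
by rewrite -ex in et *; rewrite -(divfK x1' y) et divfK.
Qed.

End FiniteField.

Section Forms.
Variable F : finFieldType.
Implicit Types (h : F) (f : cubic_form F).

Lemma neg3_disc f : - 3 * disc f = hessQ f ^+ 2 - 4 * (hessP f * hessR f).
Proof. by rewrite /disc /hessP /hessQ /hessR; ring. Qed.

Lemma absq_lt_size (p p' : {poly F}) : (absq p < absq p')%N -> (size p < size p')%N.
Proof.
rewrite /absq; have [->|p0] := eqVneq p 0; have [->|p'0] := eqVneq p' 0 => //.
  by rewrite size_poly0 size_poly_gt0.
rewrite ltn_exp2l ?finNzRing_gt1 //; have := size_poly_gt0 p; rewrite p0; lia.
Qed.

Lemma partially_reduced_lead h (A B C : {poly F}) :
  partially_reduced h A B C -> size A = size C -> lead_coef A = 1 /\ (size B < size A)%N.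
Proof.
move=> [/absq_lt_size ltBA _ _ eqAC _] eqsAC; split => //; apply: eqAC.
have A0 : A != 0 by rewrite -size_poly_gt0; apply: leq_ltn_trans ltBA.
have C0 : C != 0 by rewrite -size_poly_gt0 -eqsAC size_poly_gt0.
by rewrite /absq (negbTE A0) (negbTE C0) eqsAC.
Qed.

Lemma degle2_size (p : {poly F}) (n : nat) :
  (0 < n)%N -> degle p 2 (n.-1).*2 -> (size p <= n)%N.
Proof. by move=> n0 /orP[/eqP->|]; rewrite ?size_poly0 //; lia. Qed.

Lemma degle4_size (p : {poly F}) (n : nat) :
  (0 < n)%N -> degle p 4 (n.-1).*2 -> (size (p * p)%R <= n)%N.
Proof.
move=> n0 /orP[/eqP->|]; first by rewrite mul0r size_poly0.
by move=> ?; apply: leq_trans (size_polyMleq _ _) _; lia.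
Qed.

(* Says that the Hessian of a form of degree <= k with t^k-coefficients A, B, C, D has
   t^2k-coefficients 1, 0, -h/4. *)
Definition top_hessian (A B C D h : F) : Prop :=
  [/\ B ^+ 2 - 3 * A * C = 1, B * C - 9 * A * D = 0 & 4 * (C ^+ 2 - 3 * B * D) = - h].

Definition hessian_normal (k : nat) h f : Prop :=
  [/\ size (fa f) <= k.+1, size (fb f) <= k.+1,
      size (fc f) <= k.+1 & size (fd f) <= k.+1]%N /\
  top_hessian (fa f)`_k (fb f)`_k (fc f)`_k (fd f)`_k h.

Lemma top_hessian_norm1 (A B C D h : F) : 2%:R != 0 :> F ->
  top_hessian A B C D h -> B ^+ 2 - h * (3 * A / 2) ^+ 2 = 1.
Proof.
move=> n2 [E1 E2 E3]; have -> : h = - (4 * (C ^+ 2 - 3 * B * D)) by rewrite E3 opprK.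
apply/eqP; rewrite -subr_eq0; apply/eqP.
transitivity ((B ^+ 2 - 3 * A * C - 1) * (1 - 3 * A * C) + 3 * A * B * (B * C - 9 * A * D)).
  by field.
by rewrite E1 E2 subrr mul0r mulr0 addr0.
Qed.

Lemma top_hessian_negx (A B C D h : F) :
  top_hessian A B C D h -> top_hessian (- A) B (- C) D h.
Proof.
case=> E1 E2 E3; split; last by rewrite sqrrN.
  by rewrite !mulrN mulNr opprK.
by rewrite mulrN [9 * _]mulrN mulNr opprK addrC -opprB E2 oppr0.
Qed.

Lemma top_hessian_unique (A B C D C' D' h : F) : 2%:R != 0 :> F -> 3%:R != 0 :> F ->
  top_hessian A B C D h -> top_hessian A B C' D' h -> C = C' /\ D = D'.
Proof.
move=> n2 n3 [E1 E2 E3] [E1' E2' E3'].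
have [A0|A0] := eqVneq A 0.
  move: E1 E2 E2' E3 E3'; rewrite A0 !mulr0 !mul0r !subr0 => E1 E2 E2' E3 E3'.
  have B0 : B != 0 by apply: contra_eq_neq E1 => ->; rewrite expr0n eq_sym oner_eq0.
  have C0 : C = 0 by move/eqP: E2; rewrite mulf_eq0 (negbTE B0) => /eqP.
  have C'0 : C' = 0 by move/eqP: E2'; rewrite mulf_eq0 (negbTE B0) => /eqP.
  have n4 : 4%:R != 0 :> F by rewrite -[4%N]/(2 * 2)%N natrM mulf_neq0.
  split; first by rewrite C0 C'0.
  move: E3; rewrite -E3' C0 C'0 expr2 mul0r !sub0r => /eqP.
  have nz : 4 * 3 * B != 0 by rewrite !mulf_neq0.
  by rewrite !mulrN eqr_opp !mulrA (inj_eq (mulfI nz)) => /eqP.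
have n9 : 9%:R != 0 :> F by rewrite -[9%N]/(3 * 3)%N natrM mulf_neq0.
have e1 (C0 : F) : B ^+ 2 - 3 * A * C0 = 1 -> 3 * A * C0 = B ^+ 2 - 1.
  by move=> E; apply/eqP; rewrite eq_sym subr_eq addrC -subr_eq E.
have eC : C = C' by apply: (mulfI (mulf_neq0 n3 A0)); rewrite (e1 C E1) (e1 C' E1').
split => //; apply: (mulfI (mulf_neq0 n9 A0)).
by rewrite -(subr0_eq E2) -(subr0_eq E2') eC.
Qed.

Lemma counted_hessian_normal h s f : 2%:R != 0 :> F -> 3%:R != 0 :> F ->
  counted h s f -> ~ is_square h /\ exists2 k, s = (4 * k)%N & hessian_normal k h f.
Proof.
move=> n2 n3 [[[a0 _] [_ Ds] [dga dgb] [dgad dgbc] _] [sgnD sgnDh] pr eqPR].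
have n4 : 4%:R != 0 :> F by rewrite -[4%N]/(2 * 2)%N natrM mulf_neq0.
have [lcP ltQP] := partially_reduced_lead pr eqPR.
have [szD lcD] := size_lead_quad_disc n4 ltQP (esym eqPR).
rewrite -neg3_disc lcP mul1r in szD lcD; set n := size (hessP f) in eqPR ltQP szD.
have n0 : (0 < n)%N by rewrite size_poly_gt0 -lead_coef_eq0 lcP oner_neq0.
have Es : s = (n.-1).*2.
  rewrite -Ds -(size_natmul (disc f) n3) -size_polyN -mulNr szD; lia.
have [sgh nsq] : sgn (- 3 * disc f) = h /\ ~ is_square h.
  have ev : ~~ odd (size (- 3 * disc f)).-1.
    by rewrite szD (_ : (n + n).-2 = (n.-1).*2) ?odd_double //; lia.
  case: sgnD => [[_ od]|[_ [_ nsq]]]; first by rewrite od in ev.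
  by case: sgnDh => e; rewrite e in nsq *; first by case: nsq; exists 1; rewrite expr1n.
rewrite Es in dga dgb dgad dgbc.
have EP : size (fb f * fb f - 3%:R * (fa f * fc f)) = n by rewrite mulrA -expr2.
have ER : size (fc f * fc f - 3%:R * (fb f * fd f)) = n by rewrite mulrA -expr2 eqPR.
have [k En sizes] := hessian_size_bound n3 a0 EP ER (degle4_size n0 dga)
  (degle4_size n0 dgb) (degle2_size n0 dgad) (degle2_size n0 dgbc).
split => //; exists k; first by rewrite Es En; lia.
split => //; have [Ha Hb Hc Hd] := sizes.
have topP : (hessP f)`_(k + k) = 1 by rewrite -lcP lead_coefE -/n En.
have topQ : (hessQ f)`_(k + k) = 0 by rewrite nth_default // -ltnS -En.
have topR : 4 * (hessR f)`_(k + k) = - h.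
  by rewrite -sgh /sgn lcD opprK lead_coefE -eqPR En.
move: topP topQ topR; rewrite /hessP /hessQ /hessR /top_hessian !expr2.
by rewrite !coef_quad_top; [split | split..].
Qed.

Definition form_negx f : cubic_form F := (- fa f, fb f, - fc f, fd f).

Lemma form_negxK : involutive form_negx.
Proof. by case=> [[[a b] c] d]; rewrite /form_negx /fa /fb /fc /fd /= !opprK. Qed.

Lemma hessian_normal_negx k h f : hessian_normal k h f -> hessian_normal k h (form_negx f).
Proof.
move=> [[sa sb sc sd] T]; split; first by rewrite /= !size_polyN.
by rewrite /= !coefN; apply: top_hessian_negx.
Qed.

(* The top coefficients of fc f and fd f are omitted: see top_hessian_unique. *)
Definition encode (k : nat) f :
    (F * F) * (k.-tuple F * k.-tuple F * k.-tuple F * k.-tuple F) :=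
  (((fb f)`_k, 3 * (fa f)`_k / 2),
   (low_coefs k (fa f), low_coefs k (fb f), low_coefs k (fc f), low_coefs k (fd f))).

Lemma encode_inj k h f g : 2%:R != 0 :> F -> 3%:R != 0 :> F ->
  hessian_normal k h f -> hessian_normal k h g -> encode k f = encode k g -> f = g.
Proof.
case: f g => [[[a b] c] d] [[[a' b'] c'] d'] n2 n3.
rewrite /hessian_normal /encode /fa /fb /fc /fd /=.
move=> [[sa sb sc sd] Tf] [[sa' sb' sc' sd'] Tg].
case=> eB eA ea eb ec ed.
have {}eA : a`_k = a'`_k by apply: (mulfI n3); apply: (mulIf (invr_neq0 n2)).
rewrite -eA -eB in Tg; have [eC eD] := top_hessian_unique n2 n3 Tf Tg.
have low_eq (x y : {poly F}) :
    val (low_coefs k x) = val (low_coefs k y) -> low_coefs k x = low_coefs k y.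
  exact: val_inj.
by rewrite (poly_top_low_inj sa sa' eA (low_eq a a' ea))
  (poly_top_low_inj sb sb' eB (low_eq b b' eb))
  (poly_top_low_inj sc sc' eC (low_eq c c' ec))
  (poly_top_low_inj sd sd' eD (low_eq d d' ed)).
Qed.

Lemma uniq_cat_negx h (l : seq (cubic_form F)) :
  primitive_root h -> 2%:R != 0 :> F -> uniq l ->
  (forall f, f \in l -> inS h (sgn (fa f))) -> uniq (l ++ map form_negx l).
Proof.
move=> hF n2 ul Sl; rewrite cat_uniq ul (map_inj_uniq (can_inj form_negxK)) ul andbT /=.
apply/hasPn => _ /mapP[g gl ->]; apply/negP => /Sl Sg'.
by apply: (inS_oppr hF n2 (Sl g gl)); rewrite /sgn -lead_coefN.
Qed.

Lemma size_hessian_normal_le h k (G : seq (cubic_form F)) :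
  2%:R != 0 :> F -> 3%:R != 0 :> F -> ~ is_square h -> uniq G ->
  (forall g, g \in G -> hessian_normal k h g) -> (size G <= #|F|.+1 * #|F| ^ (4 * k))%N.
Proof.
move=> n2 n3 nsq uG NG.
pose W := setX (norm1_conic h) [set: k.-tuple F * k.-tuple F * k.-tuple F * k.-tuple F].
have : (size (map (encode k) G) <= #|W|)%N.
  rewrite cardE; apply: uniq_leq_size.
    by rewrite map_inj_in_uniq // => f g /NG Nf /NG Ng; apply: encode_inj n2 n3 Nf Ng.
  move=> _ /mapP[g /NG [_ Tg] ->].
  by rewrite mem_enum in_setX in_setT andbT inE /= (top_hessian_norm1 n2 Tg).
rewrite size_map cardsX cardsT !card_prod !card_tuple -!expnD => /leq_trans; apply.
by rewrite leq_mul ?card_norm1_conic // (_ : (k + k + k + k = 4 * k)%N) //; lia.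
Qed.

End Forms.

Theorem mainTheorem15 (F : finFieldType) (h : F) :
  coprime #|F| 6 -> primitive_root h ->
  forall s : nat,
    ((s %% 4 == 0)%N ->
       forall l : seq (cubic_form F), uniq l -> (forall f, f \in l -> counted h s f) ->
       (2 * size l <= #|F|.+1 * #|F| ^ s)%N) /\
    ((s %% 4 != 0)%N -> forall f : cubic_form F, ~ counted h s f).
Proof.
move=> cop hF s.
have n2 : 2%:R != 0 :> F by apply: (natr_neq0_coprime cop).
have n3 : 3%:R != 0 :> F by apply: (natr_neq0_coprime cop).
split; last first.
  by move=> s4 f /(counted_hessian_normal n2 n3) [_ [k Es _]]; rewrite Es modnMr in s4.
move=> _ l ul cl.
have [->//|[f0 f0l]] : l = [::] \/ exists f0, f0 \in l.
  by case: l {ul cl} => [|f0 l]; [left | right; exists f0; rewrite mem_head].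
have [nsq [k Es _]] := counted_hessian_normal n2 n3 (cl f0 f0l).
have normal f : f \in l -> hessian_normal k h f.
  move=> /cl /(counted_hessian_normal n2 n3) [_ [k' Es' Nf]].
  by have -> : k = k' by apply/eqP; rewrite -(eqn_pmul2l (isT : (0 < 4)%N)) -Es -Es'.
have uG : uniq (l ++ map (@form_negx F) l).
  apply: (uniq_cat_negx hF n2 ul) => f fl.
  by have [[_ _ _ _ Sf] _ _ _] := cl f fl.
rewrite Es mul2n -addnn -{2}(size_map (@form_negx F) l) -size_cat.
apply: (size_hessian_normal_le n2 n3 nsq uG) => g.
rewrite mem_cat => /orP[/normal // | /mapP[g' /normal Ng' ->]].
exact: hessian_normal_negx.
Qed.
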